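(* Let $n\ge1$, let $\Lambda$ be a completely positive trace-preserving (CPTP) map on operators on $\mathcal{H}=(\mathbb{C}^3)^{\otimes n}$, and suppose every Pauli $P\in\mathbb{P}_n$ is implemented noisily as $\hat{\mathcal{P}}=\mathcal{P}\circ\Lambda$ (gate-independent noise). Let $\hat\rho_0$ be a (noisy) initial state and $\hat\Pi_c$ a (noisy) Hermitian measurement effect on $\mathcal{H}$, and for $m\ge1$ define the LRB average $$p_{\Pi_c}(m)=\frac{1}{|\mathbb{P}_n|^m}\sum_{P_1,\dots,P_m\in\mathbb{P}_n}\operatorname{tr}\big(\hat\Pi_c\,\hat{\mathcal{P}}_m\circ\cdots\circ\hat{\mathcal{P}}_1(\hat\rho_0)\big).$$ Let $Q=Q_\Lambda$ be the $2^n\times 2^n$ matrix indexed by $\{c,l\}^n$ with entries $Q_{\bm i,\bm j}=\operatorname{tr}(\Pi_{\bm i}\Lambda(\widetilde{\Pi}_{\bm j}))$. Then there is a state $\tilde\rho_0$ on $\mathcal{H}$ determined by $\hat\rho_0$ (and $\Lambda$) such that for every $m\ge1$ $$p_{\Pi_c}(m)=\sum_{\bm i,\bm j\in\{c,l\}^n}\operatorname{tr}(\widetilde{\Pi}_{\bm i}\hat\Pi_c)\,(Q^{m-1})_{\bm i,\bm j}\,\operatorname{tr}(\Pi_{\bm j}\tilde\rho_0).$$ Moreover the average leakage rate of $\Lambda$ equals $L_{\mathrm{ave}}(\Lambda)=1-Q_{c^n,c^n}$ and the average seepage rate equals $S_{\mathrm{ave}}(\Lambda)=\frac{1}{3^n-2^n}\sum_{\bm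 i\ne c^n}\dim(\mathcal{H}_{\bm i})\,Q_{c^n,\bm i}$, where $c^n=(c,\dots,c)$.
   Context: A single qubit with leakage is $\mathbb{C}^3$ with basis $\{|0\rangle,|1\rangle,|2\rangle\}$; single-qubit projectors $\Pi_c=|0\rangle\langle0|+|1\rangle\langle1|$ (computational) and $\Pi_l=|2\rangle\langle2|$ (leakage). For $\bm i\in\{c,l\}^n$, $\Pi_{\bm i}=\bigotimes_k\Pi_{i_k}$ with range $\mathcal{H}_{\bm i}$ and $\widetilde{\Pi}_{\bm i}=\Pi_{\bm i}/\dim(\mathcal{H}_{\bm i})$. The $n$-qubit computational projector is $\Pi_c:=\Pi_{c^n}$ (rank $2^n$), the leakage projector is $\Pi_l:=\mathbb{I}-\Pi_c$ (rank $3^n-2^n$), and $\widetilde{\Pi}_c=\Pi_c/2^n$, $\widetilde{\Pi}_l=\Pi_l/(3^n-2^n)$. The average leakage and seepage rates of a channel $\Lambda$ are $L_{\mathrm{ave}}(\Lambda)=\operatorname{tr}(\Pi_l\Lambda(\widetilde{\Pi}_c))$ and $S_{\mathrm{ave}}(\Lambda)=\operatorname{tr}(\Pi_c\Lambda(\widetilde{\Pi}_l))$. Pauli group: $\mathbb{P}=\{\pm1,\pm\mathrm{i}\}\times\{I,X,Y,Z\}$, $\mathbb{P}_n=\mathbb{P}^{\times n}$; for $U\in\mathbb{P}$ the qutrit channel is $\rho\mapsto(U\oplus1)\rho(U\oplus1)^\dagger$ ($U$ on $\operatorname{span}\{|0\rangle,|1\rangle\}$, identity on $|2\rangle$), and for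 $P=(P_1,\dots,P_n)$ the ideal channel $\mathcal{P}$ is the tensor product of these. *)

(* Scalars: an arbitrary numClosedFieldType C
   (e.g. the complex numbers); the statement is purely algebraic. *)
From HB Require Import structures.
From mathcomp Require Import all_boot all_order all_algebra.
Set Implicit Arguments. Unset Strict Implicit. Unset Printing Implicit Defensive.
Import Order.TTheory GRing.Theory Num.Theory.
Local Open Scope ring_scope.

Section Defs.
Variable C : numClosedFieldType.

Definition adj (p q : nat) (A : 'M[C]_(p, q)) : 'M[C]_(q, p) :=
  (map_mx (fun z => z^*) A)^T.

Definition is_hermitian (d : nat) (A : 'M[C]_d) : Prop := adj A = A.

Definition psd (d : nat) (A : 'M[C]_d) : Prop :=
  forall v : 'cV[C]_d, 0 <= (adj v *m A *m v) 0 0.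

Definition is_state (d : nat) (rho : 'M[C]_d) : Prop :=
  psd rho /\ \tr rho = 1.

(* An operator on C^k (x) C^d given by its k x k family of d x d blocks
   X a b = (<a| (x) I) X (|b> (x) I) is psd. *)
Definition block_psd (d k : nat) (X : 'I_k -> 'I_k -> 'M[C]_d) : Prop :=
  forall v : 'I_k -> 'cV[C]_d,
    0 <= \sum_(a < k) \sum_(b < k) (adj (v a) *m X a b *m v b) 0 0.

(* Lam (x) id_k is positive for every k (Lam (x) id_k acts blockwise). *)
Definition completely_positive (d : nat) (Lam : 'M[C]_d -> 'M[C]_d) : Prop :=
  forall (k : nat) (X : 'I_k -> 'I_k -> 'M[C]_d),
    block_psd X -> block_psd (fun a b => Lam (X a b)).

Definition trace_preserving (d : nat) (Lam : 'M[C]_d -> 'M[C]_d) : Prop :=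
  forall X, \tr (Lam X) = \tr X.

(* computational basis of (C^3)^{(x) n}: strings of qutrit levels *)
Definition St (n : nat) := {ffun 'I_n -> 'I_3}.
Definition Dim (n : nat) := #|St n|.
Definition Op (n : nat) := 'M[C]_(Dim n).
Definition lev (n : nat) (x : 'I_(Dim n)) (k : 'I_n) : 'I_3 :=
  (@enum_val (St n) (mem {: St n}) x) k.

(* labels {c,l}^n : false = c (computational), true = l (leaked) *)
Definition Lab (n : nat) := {ffun 'I_n -> bool}.
Definition cn (n : nat) : Lab n := [ffun _ => false].

(* Pi_i = (x)_k Pi_{i_k}, Pi_c = |0><0|+|1><1|, Pi_l = |2><2| *)
Definition Pi (n : nat) (i : Lab n) : Op n :=
  \matrix_(x, y) ((x == y) &&
     [forall k : 'I_n, (nat_of_ord (lev x k) == 2%N) == i k])%:R.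

(* dim H_i = rank of Pi_i *)
Definition dimH (n : nat) (i : Lab n) : nat := \rank (Pi i).

Definition tPi (n : nat) (i : Lab n) : Op n := ((dimH i)%:R)^-1 *: Pi i.

Definition Pic (n : nat) : Op n := Pi (cn n).
Definition Pil (n : nat) : Op n := 1%:M - Pic n.
Definition tPic (n : nat) : Op n := ((2 ^ n)%:R)^-1 *: Pic n.
Definition tPil (n : nat) : Op n := ((3 ^ n - 2 ^ n)%:R)^-1 *: Pil n.

Definition L_ave (n : nat) (Lam : Op n -> Op n) : C := \tr (Pil n *m Lam (tPic n)).
Definition S_ave (n : nat) (Lam : Op n -> Op n) : C := \tr (Pic n *m Lam (tPil n)).

(* single-qubit Pauli: (phase in {1,-1,i,-i}) x (I,X,Y,Z) *)
Definition Pauli1 := ('I_4 * 'I_4)%type.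

Definition phase (a : 'I_4) : C :=
  match nat_of_ord a with 0 => 1 | 1 => -1 | 2 => 'i | _ => - 'i end.

Definition pauli2 (p : 'I_4) (a b : nat) : C :=
  match nat_of_ord p, a, b with
  | 0, 0, 0 => 1 | 0, 1, 1 => 1
  | 1, 0, 1 => 1 | 1, 1, 0 => 1
  | 2, 0, 1 => - 'i | 2, 1, 0 => 'i
  | 3, 0, 0 => 1 | 3, 1, 1 => -1
  | _, _, _ => 0
  end.

(* the qutrit matrix U (+) 1 *)
Definition qutrit_pauli (P : Pauli1) : 'M[C]_3 :=
  \matrix_(a, b)
    if (a < 2)%N && (b < 2)%N then phase P.1 * pauli2 P.2 a b
    else ((a == 2%N :> nat) && (b == 2%N :> nat))%:R.

Definition PauliN (n : nat) := {ffun 'I_n -> Pauli1}.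

(* tensor product of the qutrit matrices *)
Definition pauli_mx (n : nat) (P : PauliN n) : Op n :=
  \matrix_(x, y) \prod_(k < n) qutrit_pauli (P k) (lev x k) (lev y k).

Definition pauli_chan (n : nat) (P : PauliN n) (X : Op n) : Op n :=
  pauli_mx P *m X *m adj (pauli_mx P).

(* noisy sequence  hatP_m o ... o hatP_1 , hatP = P o Lam,
   applied to rho; s = [P_1; ...; P_m] *)
Definition noisy_seq (n : nat) (Lam : Op n -> Op n) (s : seq (PauliN n))
  (rho : Op n) : Op n :=
  foldl (fun r P => pauli_chan P (Lam r)) rho s.

Definition p_LRB (n : nat) (Lam : Op n -> Op n) (Pihat rho0 : Op n) (m : nat) : C :=
  ((#|PauliN n| ^ m)%:R)^-1 *
  \sum_(s : m.-tuple (PauliN n)) \tr (Pihat *m noisy_seq Lam s rho0).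

Definition Qent (n : nat) (Lam : Op n -> Op n) (i j : Lab n) : C :=
  \tr (Pi i *m Lam (tPi j)).

Definition Qmx (n : nat) (Lam : Op n -> Op n) : 'M[C]_#|Lab n| :=
  \matrix_(a, b) Qent Lam (enum_val a) (enum_val b).

Definition Qpow (n : nat) (Lam : Op n -> Op n) (k : nat) (i j : Lab n) : C :=
  (iter k (mulmx (Qmx Lam)) 1%:M) (enum_rank i) (enum_rank j).

End Defs.

(* Twirling by the Paulis U (+) 1, i.e. conjugating by all of them and averaging,
   kills every off-diagonal entry and averages the diagonal within each sector H_i,
   so the twirl is X |-> sum_i tr(Pi_i X) Pi~_i.  On one qutrit this is the
   orthogonality of the 2x2 Pauli matrices together with the vanishing of the
   average global phase.  Averaging a noisy sequence over independent Paulis thus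
   gives the m-th iterate of (twirl o Lam), which maps the span of the Pi~_j to
   itself with matrix Q, and the LRB formula holds with rho~ = Lam(rho0).  The
   leakage and seepage rates are entries of Q because Pi~_c = Pi~_{c^n} and
   Pi_l = sum_{i <> c^n} dim(H_i) Pi~_i. *)

From HB Require Import structures.
From mathcomp Require Import all_boot all_order all_algebra.
Import Order.TTheory GRing.Theory Num.Theory.
Set Implicit Arguments. Unset Strict Implicit. Unset Printing Implicit Defensive.
Local Open Scope ring_scope.

Lemma mxrank_diag (F : fieldType) (N : nat) (d : 'rV[F]_N) :
  \rank (diag_mx d) = (\sum_(i < N) (d ord0 i != 0%R))%N.
Proof.
elim: N d => [|N IH] d; first by rewrite big_ord0 flatmx0 mxrank0.
pose l := lsubmx (d : 'rV_(1 + N)); pose r := rsubmx (d : 'rV_(1 + N)).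
have := diag_mx_row l r; rewrite hsubmxK => ->.
rewrite [LHS](rank_diag_block_mx (diag_mx l) (diag_mx r)) IH big_ord_recl.
congr (_ + _)%N.
  rewrite [diag_mx l]mx11_scalar !mxE eqxx mulr1n.
  rewrite (_ : lshift N 0 = ord0); last exact: val_inj.
  have [->|nz] := eqVneq (d ord0 ord0) 0; first by rewrite raddf0 mxrank0.
  by rewrite mxrank_unit // unitmxE det_scalar1 unitfE.
by apply: eq_bigr => i _; rewrite mxE; congr (d _ _ != 0); apply: val_inj.
Qed.

Lemma prodr_nat_bool (R : comPzSemiRingType) (I : finType) (P : pred I) :
  \prod_i ((P i)%:R : R) = [forall i, P i]%:R.
Proof.
have [/forallP allP | /forallPn [i nPi]] := boolP [forall i, P i].
  by rewrite big1 // => i _; rewrite allP.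
by rewrite (bigD1 i) //= (negbTE nPi) mul0r.
Qed.

Lemma big_tuple_rcons (R : Type) (idx : R) (op : Monoid.com_law idx)
    (T : finType) m (F : m.+1.-tuple T -> R) :
  \big[op/idx]_(s : m.+1.-tuple T) F s =
  \big[op/idx]_(t : m.-tuple T) \big[op/idx]_(x : T) F [tuple of rcons t x].
Proof.
rewrite pair_big /= (reindex (fun p : m.-tuple T * T => [tuple of rcons p.1 p.2])) //=.
exists (fun s => ([tuple of belast (thead s) (behead s)], last (thead s) (behead s))).
  move=> [t x] _; set u := [tuple of rcons t x].
  have : rcons t x = rcons (belast (thead u) (behead u)) (last (thead u) (behead u)).
    by rewrite -lastI; exact: (congr1 val (tuple_eta u)).
  by case/rcons_inj => eq_t eq_x; congr pair; [apply: val_inj|].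
move=> s _; apply: val_inj; rewrite /= -lastI.
exact: (esym (congr1 val (tuple_eta s))).
Qed.

Lemma cptp_state (C : numClosedFieldType) d (Lam : 'M[C]_d -> 'M[C]_d) (rho : 'M[C]_d) :
  completely_positive Lam -> trace_preserving Lam -> is_state rho -> is_state (Lam rho).
Proof.
move=> CP TP [psd_rho tr_rho]; split; last by rewrite TP.
move=> v; have block_rho : block_psd (fun _ _ : 'I_1 => rho).
  by move=> w; rewrite !big_ord1; exact: psd_rho.
by have := CP 1%N _ block_rho (fun _ => v); rewrite !big_ord1.
Qed.

Definition leaked (a : 'I_3) : bool := nat_of_ord a == 2%N.

Lemma card_leaked (b : bool) : #|[pred a : 'I_3 | leaked a == b]| = if b then 1%N else 2%N.
Proof. by case: b; rewrite -sum1_card big_mkcond !big_ord_recl big_ord0. Qed.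

Lemma card_PauliN n : #|PauliN n| = (16 ^ n)%N.
Proof. by rewrite card_ffun card_prod !card_ord. Qed.

Section QutritPauli.
Variable C : numClosedFieldType.

Lemma sum_phase : \sum_(a < 4) phase C a = 0.
Proof. by rewrite !big_ord_recl big_ord0 /phase /= addrA addrN add0r addr0 addrN. Qed.

Lemma phase_mul_conj a : phase C a * (phase C a)^* = 1.
Proof.
rewrite -normCK.
by case: a => [[|[|[|[|?]]]] ?] //; rewrite /phase /= ?normrN ?normCi ?normr1 expr1n.
Qed.

Lemma pauli2_orthogonal (b c d e : 'I_3) :
  ~~ leaked b -> ~~ leaked c -> ~~ leaked d -> ~~ leaked e ->
  \sum_(s < 4) pauli2 C s b c * (pauli2 C s d e)^* = ((b == d) && (c == e))%:R *+ 2.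
Proof.
have ii : 'i * 'i = -1 :> C by rewrite -expr2 sqrCi.
have conjN (x : C) : (- x)^* = - x^* by rewrite rmorphN.
by case: b => [[|[|[|?]]] ?] //; case: c => [[|[|[|?]]] ?] //;
case: d => [[|[|[|?]]] ?] //; case: e => [[|[|[|?]]] ?] // _ _ _ _;
rewrite !big_ord_recl big_ord0 /pauli2 /= ?conjN ?conjC0 ?conjC1 ?conjCi
  ?mulr0 ?mul0r ?mulr1 ?mulrN ?mulNr ?opprK ?ii ?oppr0 ?addr0 ?add0r ?opprK ?addrN
  ?mulr1 ?subrr ?mul0rn ?mulr2n.
Qed.

Lemma qutrit_pauliE p b c : qutrit_pauli C p b c =
  if ~~ leaked b && ~~ leaked c then phase C p.1 * pauli2 C p.2 b c
  else (leaked b && leaked c)%:R.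
Proof. by rewrite mxE; case: b => [[|[|[|?]]] ?]; case: c => [[|[|[|?]]] ?]. Qed.

Lemma qutrit_pauli_sum (b c d e : 'I_3) :
  \sum_(p : Pauli1) qutrit_pauli C p b c * (qutrit_pauli C p d e)^* =
  ((b == d) && (c == e) && (leaked b == leaked c))%:R * (if leaked b then 16 else 8).
Proof.
rewrite -(pair_big xpredT xpredT (fun a s =>
  qutrit_pauli C (a, s) b c * (qutrit_pauli C (a, s) d e)^*)) /=.
under eq_bigr => a _ do under eq_bigr => s _ do rewrite !qutrit_pauliE /=.
have [bc|bc] := boolP (~~ leaked b && ~~ leaked c);
  have [de|de] := boolP (~~ leaked d && ~~ leaked e).
- under eq_bigr => a _ do under eq_bigr => s _ do
    rewrite rmorphM mulrACA phase_mul_conj mul1r.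
  case/andP: bc => lb lc; case/andP: de => ld le.
  rewrite sumr_const card_ord pauli2_orthogonal // (negbTE lb) (negbTE lc) /=.
  by rewrite eqxx andbT [RHS]mulr_natr -mulrnA.
- (* an entry inside the qubit block paired with one outside it: the phase averages out *)
  have -> : (b == d) && (c == e) = false by apply: contraNF de => /andP[/eqP<- /eqP<-].
  under eq_bigr => a _ do under eq_bigr => s _ do rewrite -mulrA.
  by rewrite exchange_big big1 ?mul0r // => s _; rewrite -mulr_suml sum_phase mul0r.
- have -> : (b == d) && (c == e) = false by apply: contraNF bc => /andP[/eqP-> /eqP->].
  under eq_bigr => a _ do under eq_bigr => s _ do rewrite rmorphM mulrCA.
  rewrite exchange_big big1 ?mul0r // => s _.
  by rewrite -mulr_suml -rmorph_sum sum_phase rmorph0 mul0r.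
- rewrite !sumr_const !card_ord conjC_nat -natrM -!mulrnA.
  move: bc de; case: b => [[|[|[|?]]] ?] //; case: c => [[|[|[|?]]] ?] //;
    case: d => [[|[|[|?]]] ?] //; case: e => [[|[|[|?]]] ?] //;
    rewrite /leaked /= ?mul0r ?mul1r //.
Qed.

End QutritPauli.

Section Projectors.
Variables (C : numClosedFieldType) (n : nat).

Definition label (x : 'I_(Dim n)) : Lab n := [ffun k => leaked (lev x k)].

Lemma PiE (i : Lab n) x y : Pi C i x y = ((x == y) && (label x == i))%:R.
Proof.
rewrite mxE; congr ((_ && _)%:R).
apply/forallP/eqP => [eq_i|<- k]; last by rewrite ffunE.
by apply/ffunP => k; rewrite ffunE; exact: (eqP (eq_i k)).
Qed.

Lemma tPiE (i : Lab n) x y : tPi C i x y = ((x == y) && (label x == i))%:R / (dimH C i)%:R.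
Proof. by rewrite mxE PiE mulrC. Qed.

Lemma Pi_diag (i : Lab n) : Pi C i = diag_mx (\row_x (label x == i)%:R).
Proof.
apply/matrixP => x y; rewrite PiE !mxE.
by have [->|] := eqVneq x y; rewrite ?mulr1n ?mulr0n.
Qed.

Lemma dimHE (i : Lab n) : dimH C i = (\sum_x (label x == i))%N.
Proof.
rewrite /dimH Pi_diag mxrank_diag; apply: eq_bigr => x _.
by rewrite mxE; case: (label x == i); rewrite ?oner_eq0 ?eqxx.
Qed.

Lemma dimH_prod (i : Lab n) : dimH C i = (\prod_(k < n) if i k then 1 else 2)%N.
Proof.
pose F k := [pred a : 'I_3 | leaked a == i k].
rewrite dimHE; transitivity #|family F|; last first.
  by rewrite card_family foldrE big_map big_enum; apply: eq_bigr => k _; apply: card_leaked.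
rewrite -sum1_card (reindex (@enum_val (St n) (mem {: St n}))) /=; last first.
  by exists enum_rank => [x _|f _]; rewrite ?enum_valK ?enum_rankK.
rewrite [RHS]big_mkcond; apply: eq_bigr => x _.
suff -> : (label x == i) = (enum_val x \in family F) by case: (_ \in _).
apply/eqP/familyP => [eq_i k|Fx]; first by rewrite inE -eq_i ffunE.
by apply/ffunP => k; rewrite ffunE; exact: (eqP (Fx k)).
Qed.

Lemma dimH_gt0 (i : Lab n) : (0 < dimH C i)%N.
Proof. by rewrite dimH_prod prodn_gt0 // => k; case: (i k). Qed.

Lemma dimH_cn : dimH C (cn n) = (2 ^ n)%N.
Proof.
rewrite dimH_prod (eq_bigr (fun => 2%N)) ?prod_nat_const ?card_ord // => k _.
by rewrite ffunE.
Qed.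

Lemma mxtrace_Pi (i : Lab n) : \tr (Pi C i) = (dimH C i)%:R.
Proof.
by rewrite Pi_diag mxtrace_diag dimHE natr_sum; apply: eq_bigr => x _; rewrite mxE.
Qed.

Lemma scale_dimH_tPi (i : Lab n) : (dimH C i)%:R *: tPi C i = Pi C i.
Proof. by rewrite scalerA mulfV ?scale1r // pnatr_eq0 -lt0n dimH_gt0. Qed.

Lemma mxtrace_tPi (i : Lab n) : \tr (tPi C i) = 1.
Proof. by rewrite mxtraceZ mxtrace_Pi mulVf // pnatr_eq0 -lt0n dimH_gt0. Qed.

Lemma sum_Pi : \sum_(i : Lab n) Pi C i = 1%:M.
Proof.
apply/matrixP => x y; rewrite summxE (bigD1 (label x)) //= big1 ?addr0.
  by rewrite PiE eqxx andbT mxE.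
by move=> i neq_i; rewrite PiE (eq_sym (label x)) (negbTE neq_i) andbF.
Qed.

Lemma Pil_sum : Pil C n = \sum_(i | i != cn n) Pi C i.
Proof. by rewrite /Pil /Pic -sum_Pi (bigD1 (cn n)) //= addrC addrK. Qed.

End Projectors.

Section PauliTwirl.
Variables (C : numClosedFieldType) (n : nat).

Lemma lev_eqE (x y : 'I_(Dim n)) : [forall k, lev x k == lev y k] = (x == y).
Proof.
rewrite /lev -(inj_eq (@enum_val_inj _ (mem {: St n}))).
by apply/forallP/eqP => [eq_xy|-> //]; apply/ffunP => k; apply/eqP.
Qed.

Lemma label_eqE (x u : 'I_(Dim n)) :
  [forall k, leaked (lev x k) == leaked (lev u k)] = (label x == label u).
Proof.
apply/forallP/eqP => [eq_xu|/ffunP eq_l k].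
  by apply/ffunP => k; rewrite !ffunE; exact: (eqP (eq_xu k)).
by have := eq_l k; rewrite !ffunE => ->.
Qed.

Lemma pauli_mx_avg (x u y v : 'I_(Dim n)) :
  (#|PauliN n|%:R)^-1 * \sum_(P : PauliN n) pauli_mx C P x u * (pauli_mx C P y v)^* =
  ((x == y) && (u == v) && (label x == label u))%:R / (dimH C (label x))%:R.
Proof.
under eq_bigr => P _ do rewrite !mxE rmorph_prod -big_split /=.
rewrite -(bigA_distr_bigA (fun k (p : Pauli1) => qutrit_pauli C p (lev x k) (lev u k) *
   (qutrit_pauli C p (lev y k) (lev v k))^*)) /=.
under eq_bigr => k _ do rewrite qutrit_pauli_sum.
have avg16 (l : bool) : 16^-1 * (if l then 16 else 8) = ((if l then 1 else 2)%:R)^-1 :> C.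
  case: l; first by rewrite mulVf ?invr1 ?pnatr_eq0.
  by rewrite [16](natrM _ 2 8) invfM -mulrA mulVf ?mulr1 ?pnatr_eq0.
rewrite card_PauliN (_ : (16 ^ n)%:R^-1 = \prod_(k < n) 16^-1 :> C); last first.
  by rewrite prodr_const card_ord natrX exprVn.
rewrite -big_split /=.
under eq_bigr => k _ do rewrite mulrCA avg16.
rewrite big_split /= prodr_nat_bool prodfV -natr_prod dimH_prod.
congr (_%:R / _%:R); last by apply: eq_bigr => k _; rewrite ffunE.
rewrite -!lev_eqE -label_eqE; congr nat_of_bool.
apply/forallP/andP => [all_k|[/andP[/forallP eq_xy /forallP eq_uv] /forallP eq_l] k].
  by split; [apply/andP; split|]; apply/forallP => k; case/andP: (all_k k) => /andP[].
by rewrite eq_xy eq_uv eq_l.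
Qed.

Definition pauli_twirl (X : Op C n) : Op C n :=
  (#|PauliN n|%:R)^-1 *: \sum_(P : PauliN n) pauli_chan P X.

Lemma mxtrace_Pi_mul (i : Lab n) (X : Op C n) :
  \tr (Pi C i *m X) = \sum_(u | label u == i) X u u.
Proof.
rewrite /mxtrace [RHS]big_mkcond; apply: eq_bigr => u _; rewrite mxE (bigD1 u) //= big1.
  by rewrite PiE eqxx /=; case: (label u == i); rewrite ?mul1r ?mul0r addr0.
by move=> w /negPf neq_wu; rewrite PiE eq_sym neq_wu mul0r.
Qed.

Lemma pauli_chanE (P : PauliN n) (X : Op C n) x y : pauli_chan P X x y =
  \sum_u \sum_v X u v * (pauli_mx C P x u * (pauli_mx C P y v)^*).
Proof.
rewrite /pauli_chan /adj mxE exchange_big /=; apply: eq_bigr => v _.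
rewrite !mxE big_distrl /=; apply: eq_bigr => u _.
by rewrite -mulrA mulrCA.
Qed.

Lemma pauli_twirlE (X : Op C n) :
  pauli_twirl X = \sum_i \tr (Pi C i *m X) *: tPi C i.
Proof.
apply/matrixP => x y.
rewrite summxE (bigD1 (label x)) //= big1 ?addr0; last first.
  by move=> i neq_i; rewrite mxE tPiE (eq_sym (label x)) (negbTE neq_i) andbF mul0r mulr0.
rewrite [RHS]mxE tPiE eqxx andbT mxtrace_Pi_mul mxE summxE.
under eq_bigr => P _ do rewrite pauli_chanE.
rewrite exchange_big mulr_sumr; under eq_bigr => u _ do rewrite exchange_big mulr_sumr.
under eq_bigr => u _ do under eq_bigr => v _ do rewrite -mulr_sumr mulrCA pauli_mx_avg.
rewrite [in RHS]big_mkcond big_distrl; apply: eq_bigr => u _ /=.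
rewrite (bigD1 u) //= big1 ?addr0 => [|v /negbTE neq_vu]; last first.
  by rewrite (eq_sym u) neq_vu andbF mul0r mulr0.
rewrite eqxx andbT (eq_sym (label x)).
by case: (label u == _); rewrite ?andbF ?mul0r ?mulr0 ?andbT.
Qed.

Fact pauli_twirl_is_linear : linear pauli_twirl.
Proof.
move=> a X Y; rewrite !pauli_twirlE scaler_sumr -big_split; apply: eq_bigr => i _ /=.
by rewrite mulmxDr -scalemxAr mxtraceD mxtraceZ scalerDl scalerA.
Qed.

HB.instance Definition _ :=
  GRing.isLinear.Build C (Op C n) (Op C n) *:%R pauli_twirl pauli_twirl_is_linear.

End PauliTwirl.

Section NoisySequences.
Variables (C : numClosedFieldType) (n : nat) (Lam : {linear Op C n -> Op C n}).

Local Notation twirled_noise := (@pauli_twirl C n \o Lam).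

Lemma card_PauliN_neq0 : #|PauliN n|%:R != 0 :> C.
Proof. by rewrite pnatr_eq0 card_PauliN expn_eq0. Qed.

Lemma sum_pauli_chan (X : Op C n) :
  \sum_(P : PauliN n) pauli_chan P X = #|PauliN n|%:R *: pauli_twirl X.
Proof. by rewrite /pauli_twirl scalerA mulfV ?scale1r ?card_PauliN_neq0. Qed.

Lemma sum_noisy_seq m (rho : Op C n) :
  \sum_(s : m.-tuple (PauliN n)) noisy_seq Lam s rho =
  (#|PauliN n| ^ m)%:R *: iter m twirled_noise rho.
Proof.
elim: m => [|m IH].
  by rewrite scale1r (big_pred1 [tuple]) // => s; apply/esym/eqP/tuple0.
rewrite big_tuple_rcons.
under eq_bigr => t _ do under eq_bigr => P _ do
  rewrite /noisy_seq foldl_rcons -/(noisy_seq _ _ _).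
under eq_bigr => t _ do rewrite sum_pauli_chan.
rewrite -scaler_sumr -(linear_sum (@pauli_twirl C n)) -(linear_sum Lam) IH.
by rewrite [Lam _]linearZZ (linearZZ (@pauli_twirl C n)) scalerA -natrM -expnS.
Qed.

Lemma p_LRB_iter m (Pihat rho : Op C n) :
  p_LRB Lam Pihat rho m = \tr (Pihat *m iter m twirled_noise rho).
Proof.
rewrite /p_LRB.
have -> : \sum_(s : m.-tuple (PauliN n)) \tr (Pihat *m noisy_seq Lam s rho) =
    \tr (Pihat *m \sum_(s : m.-tuple (PauliN n)) noisy_seq Lam s rho).
  by rewrite mulmx_sumr raddf_sum.
rewrite -mxtraceZ scalemxAr sum_noisy_seq scalerA.
by rewrite mulVf ?scale1r // natrX expf_neq0 ?card_PauliN_neq0.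
Qed.

Lemma Qpow0 i j : Qpow Lam 0 i j = (i == j)%:R.
Proof. by rewrite /Qpow /= mxE (inj_eq enum_rank_inj). Qed.

Lemma QpowS k i j : Qpow Lam k.+1 i j = \sum_l Qent Lam i l * Qpow Lam k l j.
Proof.
rewrite /Qpow /= mxE (reindex enum_rank) /=; last first.
  by exists enum_val => x _; rewrite ?enum_valK ?enum_rankK.
by apply: eq_bigr => l _; rewrite mxE !enum_rankK.
Qed.

Lemma iter_twirled_noise k (b : Lab n -> C) :
  iter k twirled_noise (\sum_j b j *: tPi C j) =
  \sum_i (\sum_j Qpow Lam k i j * b j) *: tPi C i.
Proof.
elim: k => [|k IH].
  apply: eq_bigr => i _; congr (_ *: _).
  rewrite (bigD1 i) //= big1 ?addr0 => [|j /negbTE neq_ji].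
    by rewrite Qpow0 eqxx mul1r.
  by rewrite Qpow0 eq_sym neq_ji mul0r.
rewrite iterS IH /= pauli_twirlE; apply: eq_bigr => i _; congr (_ *: _).
rewrite linear_sum mulmx_sumr linear_sum /=.
under eq_bigr => l _ do rewrite linearZZ -scalemxAr mxtraceZ.
under [RHS]eq_bigr => j _ do rewrite QpowS mulr_suml.
rewrite exchange_big /=; apply: eq_bigr => l _; rewrite mulr_suml; apply: eq_bigr => j _.
by rewrite mulrC mulrA.
Qed.

Lemma p_LRB_Qpow m (Pihat rho : Op C n) :
  p_LRB Lam Pihat rho m.+1 =
  \sum_i \sum_j \tr (tPi C i *m Pihat) * Qpow Lam m i j * \tr (Pi C j *m Lam rho).
Proof.
rewrite p_LRB_iter iterSr /= pauli_twirlE iter_twirled_noise mulmx_sumr raddf_sum.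
apply: eq_bigr => i _ /=; rewrite -scalemxAr mxtraceZ mxtrace_mulC big_distrl.
by apply: eq_bigr => j _ /=; rewrite mulrC mulrA.
Qed.

End NoisySequences.

Section LeakageRates.
Variables (C : numClosedFieldType) (n : nat) (Lam : {linear Op C n -> Op C n}).

Lemma L_ave_Qent : trace_preserving Lam -> L_ave Lam = 1 - Qent Lam (cn n) (cn n).
Proof.
move=> TP; have tPic_cn : tPic C n = tPi C (cn n) by rewrite /tPic /tPi dimH_cn.
by rewrite /L_ave /Pil mulmxBl mul1mx raddfB /= TP tPic_cn mxtrace_tPi.
Qed.

Lemma S_ave_Qent : S_ave Lam = ((3 ^ n - 2 ^ n)%:R)^-1 *
  \sum_(i : Lab n | i != cn n) (dimH C i)%:R * Qent Lam (cn n) i.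
Proof.
rewrite /S_ave /tPil [Lam _]linearZZ -scalemxAr mxtraceZ Pil_sum; congr (_ * _).
rewrite linear_sum mulmx_sumr raddf_sum; apply: eq_bigr => i _ /=.
by rewrite -scale_dimH_tPi [Lam _]linearZZ -scalemxAr mxtraceZ.
Qed.

End LeakageRates.

Theorem theorem1 (C : numClosedFieldType) (n : nat) (Hn : (0 < n)%N)
  (Lam : {linear Op C n -> Op C n})
  (HCP : completely_positive Lam) (HTP : trace_preserving Lam)
  (rho0 Pihat : Op C n) (Hrho0 : is_state rho0) (HPihat : is_hermitian Pihat) :
  (exists rhot : Op C n, is_state rhot /\
     forall m : nat, (0 < m)%N ->
       p_LRB Lam Pihat rho0 m =
       \sum_(i : Lab n) \sum_(j : Lab n)
          \tr (tPi C i *m Pihat) * Qpow Lam (m - 1) i j * \tr (Pi C j *m rhot))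
  /\ L_ave Lam = 1 - Qent Lam (cn n) (cn n)
  /\ S_ave Lam = ((3 ^ n - 2 ^ n)%:R)^-1 *
       \sum_(i : Lab n | i != cn n) (dimH C i)%:R * Qent Lam (cn n) i.
Proof.
(* The identities hold for every n and every effect, so [Hn] and [HPihat] are unused. *)
split; last by split; [exact: L_ave_Qent | exact: S_ave_Qent].
exists (Lam rho0); split; first exact: cptp_state.
by case=> // m _; rewrite subn1 p_LRB_Qpow.
Qed.
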